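(* Let $(C,D)$ define an irreducible MAP of order $p$ which is either an MMPP ($D$ diagonal) or an MSPP ($C$ diagonal). Then its limiting index of dispersion of counts satisfies $d^2\ge 1$; equivalently, $$\boldsymbol{\pi} D D_Q^{\sharp} D\mathbf{1}\ \ge\ 0,$$ where $D_Q^{\sharp}=\int_0^\infty (e^{Qu}-\mathbf{1}\boldsymbol{\pi})\,du$ is the deviation matrix of $Q=C+D$.
   Context: A Markovian arrival process (MAP) of order $p$ is specified by $p\times p$ real matrices $C$ and $D$ such that $D$ has nonnegative entries, $C$ has nonnegative off-diagonal entries, and $Q=C+D$ is the generator (row sums zero) of an irreducible continuous-time Markov chain on $\{1,\dots,p\}$; $C$ is assumed nonsingular. $C$ governs phase transitions without events and $D$ phase transitions accompanied by an event; $N(t)$ counts events in $[0,t]$. $\boldsymbol{\pi}$ is the stationary distribution of $Q$ ($\boldsymbol{\pi}Q=\mathbf{0}$, $\boldsymbol{\pi}\mathbf{1}=1$), $\mathbf{1}$ the all-ones column vector, and $\lambda^*=\boldsymbol{\pi}D\mathbf{1}$. Starting the phase at $\boldsymbol{\pi}$ gives the time-stationary version. The limiting index of dispersion is $d^2=\lim_{t\to\infty}\mathrm{Var}(N(t))/\mathbb{E}[N(t)]$ for the time-stationary version, and it equals $1+\frac{2}{\lambda^*}\boldsymbol{\pi}DD_Q^{\sharp}D\mathbf{1}$. An MMPP (Markov modulated Poisson process) is a MAP with $D$ diagonal; an MSPP (Markovian switched Poisson process) is a MAP with $C$ diagonal. *)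

From HB Require Import structures.
From mathcomp Require Import all_boot all_order all_algebra.
Set Implicit Arguments. Unset Strict Implicit. Unset Printing Implicit Defensive.
Import Order.TTheory GRing.Theory Num.Theory.
Local Open Scope ring_scope.

Definition ones (R : realFieldType) (p : nat) : 'cV[R]_p := const_mx 1.

Definition is_generator (R : realFieldType) (p : nat) (Q : 'M[R]_p) : Prop :=
  (forall i j : 'I_p, i != j -> 0 <= Q i j) /\ Q *m ones R p = 0.

Definition irreducible_gen (R : realFieldType) (p : nat) (Q : 'M[R]_p) : Prop :=
  forall i j : 'I_p, connect (fun k l : 'I_p => (k != l) && (0 < Q k l)) i j.

Definition is_MAP (R : realFieldType) (p : nat) (C D : 'M[R]_p) : Prop :=
  [/\ (forall i j : 'I_p, 0 <= D i j),
      (forall i j : 'I_p, i != j -> 0 <= C i j),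
      is_generator (C + D),
      irreducible_gen (C + D) &
      C \in unitmx].

Definition is_MMPP (R : realFieldType) (p : nat) (C D : 'M[R]_p) : Prop :=
  is_MAP C D /\ is_diag_mx D.

Definition is_MSPP (R : realFieldType) (p : nat) (C D : 'M[R]_p) : Prop :=
  is_MAP C D /\ is_diag_mx C.

Definition stationary (R : realFieldType) (p : nat) (Q : 'M[R]_p) (pi : 'rV[R]_p) : Prop :=
  [/\ pi *m Q = 0, pi *m ones R p = 1 & forall j : 'I_p, 0 <= pi 0 j].

(* Deviation matrix D_Q^# = int_0^oo (e^{Qu} - 1 pi) du, given by its standard
   closed form (1 pi - Q)^{-1} - 1 pi. *)
Definition deviation_mx (R : realFieldType) (p : nat) (Q : 'M[R]_p) (pi : 'rV[R]_p)
  : 'M[R]_p :=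
  invmx (ones R p *m pi - Q) - ones R p *m pi.

Definition event_rate (R : realFieldType) (p : nat) (D : 'M[R]_p) (pi : 'rV[R]_p) : R :=
  (pi *m D *m ones R p) 0 0.

Definition dev_form (R : realFieldType) (p : nat) (C D : 'M[R]_p) (pi : 'rV[R]_p) : R :=
  (pi *m D *m deviation_mx (C + D) pi *m D *m ones R p) 0 0.

Definition disp_index (R : realFieldType) (p : nat) (C D : 'M[R]_p) (pi : 'rV[R]_p) : R :=
  1 + 2 / event_rate D pi * dev_form C D pi.

From HB Require Import structures.
From mathcomp Require Import all_boot all_order all_algebra.
From mathcomp Require Import ring lra.
Import Order.TTheory GRing.Theory Num.Theory.
Open Scope ring_scope.

(* The deviation matrix is positive semidefinite for the pi-weighted pairing:
   h := D_Q^# f solves the Poisson equation Q h = (pi f) 1 - f with pi h = 0,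
   so <f, h>_pi = - <h, Q h>_pi, which is the Dirichlet form
   1/2 sum_ij pi_i Q_ij (h_i - h_j)^2 >= 0.  For an MMPP, pi D = (pi_j d_j)_j
   and D 1 = (d_j)_j with d the diagonal of D, so pi D D_Q^# D 1 is such a
   pairing; for an MSPP, pi D = - pi C and D 1 = - C 1, and the same applies
   to the diagonal C. *)

Section Generator.

Variables (R : realFieldType) (p : nat) (Q : 'M[R]_p) (pi : 'rV[R]_p).
Hypotheses (Q_offdiag_ge0 : forall i j : 'I_p, i != j -> 0 <= Q i j)
           (Q_ones : Q *m ones R p = 0)
           (pi_Q : pi *m Q = 0)
           (pi_ge0 : forall j, 0 <= pi 0 j).

Lemma dirichlet_formE (h : 'cV[R]_p) :
  \sum_i \sum_j pi 0 i * Q i j * (h i 0 - h j 0) ^+ 2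
  = - (2 * \sum_i pi 0 i * h i 0 * (Q *m h) i 0).
Proof.
have row_sum0 i : \sum_j Q i j = 0.
  transitivity ((Q *m ones R p) i 0); last by rewrite Q_ones mxE.
  by rewrite mxE; apply: eq_bigr => j _; rewrite mxE mulr1.
have col_sum0 j : \sum_i pi 0 i * Q i j = 0.
  by transitivity ((pi *m Q) 0 j); [rewrite mxE | rewrite pi_Q mxE].
(* Expanding the square, the h_i^2 terms die by zero row sums of Q and the
   h_j^2 terms by stationarity of pi. *)
transitivity (\sum_i \sum_j (pi 0 i * h i 0 ^+ 2 * Q i j
   + h j 0 ^+ 2 * (pi 0 i * Q i j) - 2 * (pi 0 i * h i 0 * (Q i j * h j 0)))).
  by apply: eq_bigr => i _; apply: eq_bigr => j _; ring.
under eq_bigr => i _ do rewrite sumrB big_split /=.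
rewrite sumrB big_split /= big1 => [|i _]; last by rewrite -mulr_sumr row_sum0 mulr0.
rewrite exchange_big /= big1 => [|j _]; last by rewrite -mulr_sumr col_sum0 mulr0.
rewrite mulr_sumr add0r sub0r; congr (- _); apply: eq_bigr => i _.
by rewrite -!mulr_sumr mxE.
Qed.

Lemma dirichlet_form_le0 (h : 'cV[R]_p) :
  \sum_i pi 0 i * h i 0 * (Q *m h) i 0 <= 0.
Proof.
have : 0 <= \sum_i \sum_j pi 0 i * Q i j * (h i 0 - h j 0) ^+ 2.
  apply: sumr_ge0 => i _; apply: sumr_ge0 => j _.
  have [->|ij] := eqVneq i j; first by rewrite subrr expr0n mulr0.
  by rewrite mulr_ge0 ?sqr_ge0 ?mulr_ge0 ?pi_ge0 ?Q_offdiag_ge0.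
rewrite dirichlet_formE; lra.
Qed.

Hypothesis pi_ones : pi *m ones R p = 1.

Let M := ones R p *m pi - Q.

Lemma stationary_mulM : pi *m M = pi.
Proof. by rewrite /M mulmxBr pi_Q subr0 mulmxA pi_ones mul1mx. Qed.

Lemma deviation_mx_out : M \notin unitmx -> deviation_mx Q pi = - Q.
Proof. by move=> M_out; rewrite /deviation_mx invmx_out // /M addrAC subrr add0r. Qed.

Section Invertible.

Hypothesis M_unit : M \in unitmx.

Lemma mulmx_deviation_mx : Q *m deviation_mx Q pi = ones R p *m pi - 1%:M.
Proof.
have pi_invM : pi *m invmx M = pi.
  by rewrite -{1}stationary_mulM -mulmxA mulmxV // mulmx1.
have Q_invM : Q *m invmx M = ones R p *m pi - 1%:M.
  have := mulmxV M_unit; rewrite {1}/M mulmxBl -mulmxA pi_invM => <-.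
  by rewrite opprB addrC subrK.
by rewrite /deviation_mx mulmxBr Q_invM mulmxA Q_ones mul0mx subr0.
Qed.

Lemma stationary_mul_deviation_mx : pi *m deviation_mx Q pi = 0.
Proof.
rewrite /deviation_mx mulmxBr mulmxA pi_ones mul1mx.
by rewrite -{1}stationary_mulM -mulmxA mulmxV // mulmx1 subrr.
Qed.

End Invertible.

(* If 1 pi - Q is singular (impossible under irreducibility), invmx returns it
   unchanged, D_Q^# collapses to - Q, and the claim is the Dirichlet form
   inequality itself. *)
Lemma deviation_form_ge0 (u : 'rV[R]_p) (f : 'cV[R]_p) :
  (forall j, u 0 j = pi 0 j * f j 0) ->
  0 <= (u *m deviation_mx Q pi *m f) 0 0.
Proof.
move=> uE; have [M_unit|M_out] := boolP (M \in unitmx); last first.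
  rewrite deviation_mx_out // -mulmxA mulNmx mulmxN mxE oppr_ge0.
  rewrite mxE (eq_bigr _ (fun j _ => congr1 (fun x => x * _) (uE j))).
  exact: dirichlet_form_le0.
set h := deviation_mx Q pi *m f.
have fE j : f j 0 = (pi *m f) 0 0 - (Q *m h) j 0.
  rewrite /h mulmxA mulmx_deviation_mx // mulmxBl mul1mx -mulmxA.
  by rewrite !mxE big_ord1 !mxE mul1r opprB addrC subrK.
have pi_h0 : \sum_j pi 0 j * h j 0 = 0.
  transitivity ((pi *m h) 0 0); first by rewrite mxE.
  by rewrite /h mulmxA stationary_mul_deviation_mx // mul0mx mxE.
rewrite -mulmxA -/h mxE.
have -> : \sum_j u 0 j * h j 0 =
          (pi *m f) 0 0 * \sum_j pi 0 j * h j 0 - \sum_j pi 0 j * h j 0 * (Q *m h) j 0.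
  by rewrite mulr_sumr -sumrB; apply: eq_bigr => j _; rewrite uE fE; ring.
by rewrite pi_h0 mulr0 sub0r oppr_ge0 dirichlet_form_le0.
Qed.

End Generator.

Lemma mulmx_diag_ones (R : realFieldType) (p : nat) (A : 'M[R]_p) (u : 'rV[R]_p) j :
  is_diag_mx A -> (u *m A) 0 j = u 0 j * (A *m ones R p) j 0.
Proof. by case/diag_mxP => d ->; rewrite mul_mx_diag mul_diag_mx !mxE mulr1. Qed.

Lemma dev_form_opp (R : realFieldType) (p : nat) (C D : 'M[R]_p) (pi : 'rV[R]_p) :
  (C + D) *m ones R p = 0 -> pi *m (C + D) = 0 ->
  dev_form C D pi = (pi *m C *m deviation_mx (C + D) pi *m C *m ones R p) 0 0.
Proof.
move=> Q_ones pi_Q.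
have piD : pi *m D = - (pi *m C) by apply/eqP; rewrite -addr_eq0 addrC -mulmxDr pi_Q.
have D1 : D *m ones R p = - (C *m ones R p).
  by apply/eqP; rewrite -addr_eq0 addrC -mulmxDl Q_ones.
by rewrite /dev_form -!mulmxA D1 !mulmxA piD mulmxN !mulNmx (opprK (_ : 'M[R]_1)) mulmxA.
Qed.

Lemma event_rate_ge0 (R : realFieldType) (p : nat) (D : 'M[R]_p) (pi : 'rV[R]_p) :
  (forall i j, 0 <= D i j) -> (forall j, 0 <= pi 0 j) -> 0 <= event_rate D pi.
Proof.
move=> D_ge0 pi_ge0; rewrite /event_rate mxE; apply: sumr_ge0 => j _.
rewrite !mxE mulr1; apply: sumr_ge0 => k _; exact: mulr_ge0.
Qed.

Theorem proposition1 (R : realFieldType) (p : nat) (C D : 'M[R]_p) (pi : 'rV[R]_p) :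
  (is_MMPP C D \/ is_MSPP C D) ->
  stationary (C + D) pi ->
  1 <= disp_index C D pi /\ 0 <= dev_form C D pi.
Proof.
move=> MAP_diag st; have [pi_Q pi_ones pi_ge0] := st.
have [D_ge0 _ [Q_offdiag Q_ones] _ _] : is_MAP C D by case: MAP_diag => -[].
have psd := @deviation_form_ge0 R p (C + D) pi Q_offdiag Q_ones pi_Q pi_ge0 pi_ones.
have dev_ge0 : 0 <= dev_form C D pi.
  case: MAP_diag => [[_ D_diag] | [_ C_diag]].
    by rewrite /dev_form -mulmxA; apply: psd => j; apply: mulmx_diag_ones.
  by rewrite dev_form_opp // -mulmxA; apply: psd => j; apply: mulmx_diag_ones.
split=> //; rewrite /disp_index lerDl; apply: mulr_ge0 => //.
by apply: divr_ge0 => //; apply: event_rate_ge0.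
Qed.
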